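(* Let $I$ be an instance and suppose $M\subseteq\mathrm{tent}(I)$ is safe with respect to $I$. Then every match in $M$ is finalizable in $I$.
   Context: An instance $I$ consists of finite disjoint sets $R$ (residents) and $H$ (hospitals), a positive integer quota $q_h$ for each $h\in H$, for each $r\in R$ a preference list of $r$ (a sequence of distinct members of $H$, not necessarily all), and for each $h\in H$ a preference list of $h$ (a sequence of distinct members of $R$). A list is complete if it contains every member of the opposite side; an instance is complete if all lists are complete. A match is a pair $(r,h)\in R\times H$. For a set $M$ of matches, $\mathrm{res}_h M=\{r:(r,h)\in M\}$, $\mathrm{res}\,M=\{r:(r,h)\in M\text{ for some }h\}$. $J$ is an extension of $I$ (same $R,H$, quotas) if every list of $J$ has the corresponding list of $I$ as a prefix; a complete extension is a completion. An event is $(r,h)^+$ (proposal) or $(r,h)^-$ (rejection). For an event sequence $\sigma$, $\mathrm{prop}(\sigma)$, $\mathrm{rej}(\sigma)$ are the sets of matches proposed/rejected in $\sigma$, $\mathrm{tent}(\sigma)=\mathrm{prop}(\sigma)\setminus\mathrm{rej}(\sigma)$, and $\mathrm{pend}_I(\sigma)$ is the set of $(r,h)\in\mathrm{tent}(\sigma)$ with $r$ not on the list of $h$ in $I$. A match $(r,h)\in M$ is ousted from $M$ in $I$ if the list of $h$ in $I$ contains at least $q_h$ residents of $\mathrm{res}_h M$ and either $r$ is not on it or $r$ is preceded on it by at least $q_h$ residents of $\mathrm{res}_h M$. $I$-feasible sequences: the empty sequence is $I$-feasible; if $\sigma$ is $I$-feasible then $\sigma+(r,h)^+$ is $I$-feasible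 if $r\notin\mathrm{res}\,\mathrm{tent}(\sigma)$, $(r,h)\notin\mathrm{prop}(\sigma)$, $h$ is on the list of $r$ in $I$ and $(r,h')\in\mathrm{rej}(\sigma)$ for every $h'$ preceding $h$ on it; and $\sigma+(r,h)^-$ is $I$-feasible if $(r,h)$ is ousted from $\mathrm{prop}(\sigma)$ in $I$ and $(r,h)\notin\mathrm{rej}(\sigma)$. All maximal $I$-feasible sequences contain the same events; $\mathrm{tent}(I),\mathrm{pend}(I)$ denote $\mathrm{tent}(\sigma),\mathrm{pend}_I(\sigma)$ for any maximal $I$-feasible $\sigma$. A match $(r,h)\in\mathrm{tent}(I)$ is finalizable in $I$ if $(r,h)\in\mathrm{tent}(J)$ for every completion $J$ of $I$. Let $M\subseteq\mathrm{tent}(I)$. A resident $r'$ is relevant to $h$ with respect to $M$ if $(r',h)\in M$ or $r'\notin\mathrm{res}\,M$. A match $(r,h)\in M$ is endangered in $M$ with respect to $I$ if: when $(r,h)\in\mathrm{tent}(I)\setminus\mathrm{pend}(I)$, the list of $h$ in $I$ contains at least $q_h$ residents preceding $r$ that are relevant to $h$ with respect to $M$; when $(r,h)\in\mathrm{pend}(I)$, the number of residents relevant to $h$ with respect to $M$ is at least $q_h+1$. $M$ is safe with respect to $I$ if no match of $M$ is endangered in $M$ with respect to $I$. *)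

From mathcomp Require Import all_boot.
Set Implicit Arguments. Unset Strict Implicit. Unset Printing Implicit Defensive.

Section HR.
Variables (R H : finType).

(* An instance: residents are the elements of the finite type R, hospitals
   those of H (disjoint by construction). *)
Record instance := Instance {
  quota : H -> nat;
  rpref : R -> seq H;
  hpref : H -> seq R
}.

Definition wf (I : instance) : Prop :=
  (forall h, 0 < quota I h) /\ (forall r, uniq (rpref I r)) /\
  (forall h, uniq (hpref I h)).

Definition complete (I : instance) : Prop :=
  (forall r h, h \in rpref I r) /\ (forall h r, r \in hpref I h).

Definition extension (I J : instance) : Prop :=
  (forall h, quota J h = quota I h) /\
  (forall r, prefix (rpref I r) (rpref J r)) /\
  (forall h, prefix (hpref I h) (hpref J h)).

Definition completion (I J : instance) : Prop :=
  wf J /\ extension I J /\ complete J.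

(* Events: (true, (r,h)) is the proposal (r,h)^+, (false, (r,h)) the
   rejection (r,h)^-. *)
Definition event := (bool * (R * H))%type.

Definition propS (s : seq event) : {set R * H} := [set m | (true, m) \in s].
Definition rejS (s : seq event) : {set R * H} := [set m | (false, m) \in s].
Definition tentS (s : seq event) : {set R * H} := propS s :\: rejS s.

Definition res_h (M : {set R * H}) (h : H) : {set R} := [set r | (r, h) \in M].
Definition res (M : {set R * H}) : {set R} := [set r | [exists h, (r, h) \in M]].

Definition pendS (I : instance) (s : seq event) : {set R * H} :=
  [set m in tentS s | m.1 \notin hpref I m.2].

Definition preceding (T : eqType) (x : T) (l : seq T) := take (index x l) l.

Definition ousted (I : instance) (M : {set R * H}) (r : R) (h : H) : bool :=
  [&& (r, h) \in M,
      quota I h <= count (mem (res_h M h)) (hpref I h) &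
      (r \notin hpref I h) ||
      (quota I h <= count (mem (res_h M h)) (preceding r (hpref I h)))].

Inductive feasible (I : instance) : seq event -> Prop :=
| feas_nil : feasible I [::]
| feas_prop (s : seq event) (r : R) (h : H) :
    feasible I s ->
    r \notin res (tentS s) ->
    (r, h) \notin propS s ->
    h \in rpref I r ->
    (forall h', h' \in preceding h (rpref I r) -> (r, h') \in rejS s) ->
    feasible I (rcons s (true, (r, h)))
| feas_rej (s : seq event) (r : R) (h : H) :
    feasible I s ->
    ousted I (propS s) r h ->
    (r, h) \notin rejS s ->
    feasible I (rcons s (false, (r, h))).

Definition maximal (I : instance) (s : seq event) : Prop :=
  feasible I s /\ forall e : event, ~ feasible I (rcons s e).

(* finalizable, where tent(I) is computed from the maximal I-feasible
   sequence s *)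
Definition finalizable (I : instance) (s : seq event) (m : R * H) : Prop :=
  m \in tentS s /\
  forall J : instance, completion I J ->
    forall t : seq event, maximal J t -> m \in tentS t.

Definition relevant (M : {set R * H}) (h : H) (r' : R) : bool :=
  ((r', h) \in M) || (r' \notin res M).

(* endangered / safe, with tent(I), pend(I) computed from s *)
Definition endangered (I : instance) (s : seq event) (M : {set R * H})
    (r : R) (h : H) : bool :=
  ((r, h) \in M) &&
  ( (((r, h) \in tentS s :\: pendS I s) &&
      (quota I h <= count (relevant M h) (preceding r (hpref I h))))
  || (((r, h) \in pendS I s) &&
      (quota I h + 1 <= #|[set r' | relevant M h r']|))).

Definition safe (I : instance) (s : seq event) (M : {set R * H}) : Prop :=
  forall r h, ~~ endangered I s M r h.

End HR.

From mathcomp Require Import all_boot.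
Set Implicit Arguments. Unset Strict Implicit. Unset Printing Implicit Defensive.

(* Every event of an I-feasible sequence also occurs in any maximal
   J-feasible sequence of a completion J, so a match of tent(I) can only
   leave the tentative set of J by being rejected.  Let (r,h) be the first
   match of M rejected in a maximal J-feasible sequence.  Every resident x
   proposing to h before that rejection (ahead of r on h's list, or anywhere
   if (r,h) is pending) is relevant to h: otherwise x holds a match (x,h')
   of M not yet rejected, so h precedes h' for x and h already rejected x
   in I; that rejection would oust (r,h) in I, against the maximality of
   the I-sequence.  Counting these residents shows that (r,h) is endangered
   in M. *)

Section Preceding.
Variable T : eqType.
Implicit Types (l : seq T) (x y : T).

Lemma mem_preceding l x y :
  y \in l -> (y \in preceding x l) = (index y l < index x l).
Proof. exact: in_take. Qed.

Lemma preceding_total l x y : x \in l -> y \in l -> x != y ->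
  (x \in preceding y l) || (y \in preceding x l).
Proof.
move=> xl yl neq_xy; rewrite !mem_preceding //.
by case: ltngtP => // /(index_inj x xl yl) eq_xy; rewrite eq_xy eqxx in neq_xy.
Qed.

Lemma prefix_preceding l x y :
  x \in preceding y l -> prefix (preceding x l) (preceding y l).
Proof.
move=> xy; rewrite /preceding -(take_takel _ (ltnW (index_ltn xy))).
exact: prefix_take.
Qed.

Lemma preceding_prefix l1 l2 x :
  prefix l1 l2 -> x \in l1 -> preceding x l2 = preceding x l1.
Proof.
case/prefixP=> l3 -> xl1.
by rewrite /preceding index_cat xl1 take_cat index_mem xl1.
Qed.

Lemma prefix_preceding_notin l1 l2 x :
  prefix l1 l2 -> x \notin l1 -> prefix l1 (preceding x l2).
Proof.
case/prefixP=> l3 -> xl1; rewrite /preceding index_cat (negbTE xl1) take_cat.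
by rewrite ltnNge leq_addr /= addKn prefix_prefix.
Qed.

Lemma count_prefix (a : pred T) l1 l2 : prefix l1 l2 -> count a l1 <= count a l2.
Proof. by case/prefixP=> l3 ->; rewrite count_cat leq_addr. Qed.

Lemma sub_in_count (a1 a2 : pred T) l :
  {in l, forall x, a1 x -> a2 x} -> count a1 l <= count a2 l.
Proof.
move=> sub12; rewrite -(@eq_in_count _ (predI a1 (mem l))) => [|x xl]; last first.
  by rewrite /= xl andbT.
by apply: sub_count => x /andP[a1x xl]; exact: sub12.
Qed.

End Preceding.

Lemma count_lt_card (T : finType) (a : pred T) (l : seq T) x :
  uniq l -> x \notin l -> a x -> count a l < #|[set y | a y]|.
Proof.
move=> uniq_l xl ax; have uniq_xl : uniq (x :: l) by rewrite /= xl.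
apply: leq_trans (_ : count a (x :: l) <= _); first by rewrite /= ax.
rewrite -size_filter -(card_uniqP (filter_uniq a uniq_xl)); apply: subset_leq_card.
by apply/subsetP => y; rewrite mem_filter in_set => /andP[].
Qed.

Section Feasibility.
Variables R H : finType.
Implicit Types (I J : instance R H) (s t : seq (event R H)) (M : {set R * H}).

Lemma propS_rcons_prop s m : propS (rcons s (true, m)) = m |: propS s.
Proof. by apply/setP => y; rewrite !inE mem_rcons inE xpair_eqE. Qed.

Lemma propS_rcons_rej s m : propS (rcons s (false, m)) = propS s.
Proof. by apply/setP => y; rewrite !inE mem_rcons inE xpair_eqE. Qed.

Lemma rejS_rcons_prop s m : rejS (rcons s (true, m)) = rejS s.
Proof. by apply/setP => y; rewrite !inE mem_rcons inE xpair_eqE. Qed.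

Lemma rejS_rcons_rej s m : rejS (rcons s (false, m)) = m |: rejS s.
Proof. by apply/setP => y; rewrite !inE mem_rcons inE xpair_eqE. Qed.

Lemma in_tentS s m : (m \in tentS s) = (m \notin rejS s) && (m \in propS s).
Proof. exact: in_setD. Qed.

Lemma mem_res_h M h x : (x \in res_h M h) = ((x, h) \in M).
Proof. by rewrite inE. Qed.

Lemma ousted_subset I M M' r h :
  M \subset M' -> ousted I M r h -> ousted I M' r h.
Proof.
move=> subM /and3P[rhM enough before].
have sub_res : subpred (mem (res_h M h)) (mem (res_h M' h)).
  by move=> x; rewrite !inE => /(subsetP subM).
apply/and3P; split; first exact: (subsetP subM).
  exact: leq_trans enough (sub_count sub_res _).
case/orP: before => [-> // | before].
by rewrite (leq_trans before) ?orbT ?sub_count.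
Qed.

Lemma ousted_extension I J M r h :
  extension I J -> ousted I M r h -> ousted J M r h.
Proof.
case=> eq_quota [_ ext_h] /and3P[rhM enough before].
have enoughJ := leq_trans enough (count_prefix _ (ext_h h)).
apply/and3P; split; rewrite ?eq_quota //.
have [rI | rNI] := boolP (r \in hpref I h); last first.
  case: (r \in hpref J h); rewrite ?orbT //=.
  exact: leq_trans enough (count_prefix _ (prefix_preceding_notin (ext_h h) rNI)).
by rewrite rI /= in before; rewrite (preceding_prefix (ext_h h) rI) before orbT.
Qed.

Lemma ousted_later I M x r h :
  ousted I M x h -> (r, h) \in M ->
  (r \notin hpref I h) || (x \in preceding r (hpref I h)) -> ousted I M r h.
Proof.
case/and3P=> _ enough before_x rhM before_r; apply/and3P; split => //.
case/orP: before_r => [-> // | xr]; apply/orP; right.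
have xI : x \in hpref I h := mem_take xr.
rewrite xI /= in before_x.
exact: leq_trans before_x (count_prefix _ (prefix_preceding xr)).
Qed.

Lemma feasible_rej_ousted I s r h :
  feasible I s -> (r, h) \in rejS s -> ousted I (propS s) r h.
Proof.
elim=> [|{}s r' h' _ IH _ _ _ _|{}s r' h' _ IH oust _]; first by rewrite inE.
  rewrite rejS_rcons_prop propS_rcons_prop => /IH; apply: ousted_subset.
  exact: subsetUr.
by rewrite rejS_rcons_rej propS_rcons_rej in_setU1 => /orP[/eqP[-> ->] | /IH].
Qed.

Lemma feasible_rej_prop I s r h :
  feasible I s -> (r, h) \in rejS s -> (r, h) \in propS s.
Proof. by move=> feas /(feasible_rej_ousted feas)/and3P[]. Qed.

Lemma feasible_prop_rpref I s r h :
  feasible I s -> (r, h) \in propS s -> h \in rpref I r.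
Proof.
elim=> [|{}s r' h' _ IH _ _ hr' _|{}s r' h' _ IH _ _]; first by rewrite inE.
  by rewrite propS_rcons_prop in_setU1 => /orP[/eqP[-> ->] | /IH].
by rewrite propS_rcons_rej => /IH.
Qed.

Lemma feasible_preceding_rej I s r h h' :
  feasible I s -> (r, h) \in propS s -> h' \in preceding h (rpref I r) ->
  (r, h') \in rejS s.
Proof.
move=> feas; elim: feas h => [|{}s r1 h1 _ IH _ _ _ before1|{}s r1 h1 _ IH _ _] h.
- by rewrite inE.
- rewrite propS_rcons_prop rejS_rcons_prop in_setU1.
  by case/orP=> [/eqP[-> ->] | /IH]; [exact: before1 | ].
- rewrite propS_rcons_rej rejS_rcons_rej => /IH before /before rej.
  by rewrite in_setU1 rej orbT.
Qed.

Lemma maximal_ousted_rej I s r h :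
  maximal I s -> ousted I (propS s) r h -> (r, h) \in rejS s.
Proof.
case=> feas maxs oust; apply/negPn/negP => rhN.
by apply: (maxs (false, (r, h))); apply: feas_rej.
Qed.

End Feasibility.

Section Replay.
Variables (R H : finType) (I J : instance R H) (t : seq (event R H)).
Hypotheses (extIJ : extension I J) (complJ : complete J) (maxt : maximal J t).

Lemma maximal_prop_replay r h :
  h \in rpref I r -> {in preceding h (rpref I r), forall h', (r, h') \in rejS t} ->
  (r, h) \in propS t.
Proof.
move=> hI before_rej; have [_ [ext_r _]] := extIJ; have [complR _] := complJ.
have [feast maxt'] := maxt.
have pre_eq : preceding h (rpref J r) = preceding h (rpref I r).
  exact: preceding_prefix (ext_r r) hI.
apply/negPn/negP => rhN; have [|rfree] := boolP (r \in res (tentS t)); last first.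
  apply: (maxt' (true, (r, h))); apply: feas_prop => //.
  by move=> h'; rewrite pre_eq => /before_rej.
rewrite inE => /existsP[h1]; rewrite in_tentS => /andP[h1N h1P].
have neq : h1 != h by apply: contraNneq rhN => <-.
case/orP: (preceding_total (complR r h1) (complR r h) neq).
  by rewrite pre_eq => /before_rej; rewrite (negbTE h1N).
by move=> /(feasible_preceding_rej feast h1P)/(feasible_rej_prop feast); apply/negP.
Qed.

Lemma feasible_sub_maximal s :
  feasible I s -> propS s \subset propS t /\ rejS s \subset rejS t.
Proof.
elim=> [|{}s r h _ [subP subR] _ _ hI before|{}s r h _ [subP subR] oust _].
- by split; apply/subsetP => y; rewrite inE.
- rewrite propS_rcons_prop rejS_rcons_prop subUset sub1set subP andbT.
  by split=> //; apply: maximal_prop_replay => // h' /before/(subsetP subR).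
- rewrite propS_rcons_rej rejS_rcons_rej subUset sub1set subR andbT.
  split=> //; apply: maximal_ousted_rej maxt _.
  by apply: ousted_extension extIJ _; exact: ousted_subset subP oust.
Qed.

End Replay.

Section Safe.
Variables (R H : finType) (I J : instance R H).
Variables (s : seq (event R H)) (M : {set R * H}).
Hypotheses (extIJ : extension I J) (complJ : complete J).
Hypotheses (uniqJ : forall h, uniq (hpref J h)) (maxs : maximal I s).
Hypotheses (subM : M \subset tentS s) (safeM : safe I s M).

Section FirstRejection.
Variable t : seq (event R H).
Hypotheses (feast : feasible J t) (unrejM : {in M, forall m, m \notin rejS t}).

Lemma proposer_relevant_or_rejected x h :
  (x, h) \in propS t -> relevant M h x || ((x, h) \in rejS s).
Proof.
move=> xhP; rewrite /relevant; have [// | xhNM] := boolP ((x, h) \in M).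
have [|//] := boolP (x \in res M); rewrite inE => /existsP[h' xh'M].
have neq : h' != h by apply: contraNneq xhNM => <-.
move: (subsetP subM _ xh'M); rewrite in_tentS => /andP[_ xh'P].
have [_ [ext_r _]] := extIJ; have [complR _] := complJ.
case/orP: (preceding_total (complR x h') (complR x h) neq).
  move=> /(feasible_preceding_rej feast xhP) rej.
  by have := unrejM xh'M; rewrite rej.
rewrite (preceding_prefix (ext_r x) (feasible_prop_rpref maxs.1 xh'P)).
by move=> /(feasible_preceding_rej maxs.1 xh'P).
Qed.

Lemma proposer_relevant r h x :
  (r, h) \in M -> (x, h) \in propS t ->
  (r \notin hpref I h) || (x \in preceding r (hpref I h)) -> relevant M h x.
Proof.
move=> rhM xhP ahead; case/orP: (proposer_relevant_or_rejected xhP) => // xhR.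
move: (subsetP subM _ rhM); rewrite in_tentS => /andP[rhN rhP].
have oust := ousted_later (feasible_rej_ousted maxs.1 xhR) rhP ahead.
by have := maximal_ousted_rej maxs oust; rewrite (negbTE rhN).
Qed.

Lemma rejection_endangers r h :
  (r, h) \in M -> ousted J (propS t) r h -> endangered I s M r h.
Proof.
move=> rhM /and3P[_ _ before]; have [eq_quota [_ ext_h]] := extIJ.
have [_ complH] := complJ; rewrite complH eq_quota /= in before.
have rhT := subsetP subM _ rhM.
rewrite /endangered rhM /=; have [rI | rNI] := boolP (r \in hpref I h).
  apply/orP; left; rewrite in_setD inE rhT rI /=.
  rewrite (preceding_prefix (ext_h h) rI) in before.
  apply: leq_trans before (sub_in_count _) => x xr /=; rewrite mem_res_h => xhP.
  by apply: proposer_relevant rhM xhP _; rewrite xr orbT.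
apply/orP; right; rewrite inE rhT rNI /= addn1.
apply: leq_ltn_trans (count_lt_card (x := r) (take_uniq _ (uniqJ h)) _ _).
- apply: leq_trans before (sub_in_count _) => x _ /=; rewrite mem_res_h => xhP.
  by apply: proposer_relevant rhM xhP _; rewrite rNI.
- by rewrite mem_preceding ?ltnn ?complH.
- by rewrite /relevant rhM.
Qed.

End FirstRejection.

Lemma safe_unrejected t : feasible J t -> {in M, forall m, m \notin rejS t}.
Proof.
elim=> [|{}t r h _ IH _ _ _ _|{}t r h feast IH oust _] m mM.
- by rewrite inE.
- by rewrite rejS_rcons_prop; exact: IH.
rewrite rejS_rcons_rej in_setU1 (negbTE (IH m mM)) orbF.
apply/eqP => em; rewrite em in mM.
by have := safeM r h; rewrite (rejection_endangers feast IH mM oust).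
Qed.

End Safe.

Theorem proposition8 (R H : finType) (I : instance R H) (s : seq (event R H))
    (M : {set R * H}) :
  wf I -> maximal I s -> M \subset tentS s -> safe I s M ->
  forall m, m \in M -> finalizable I s m.
Proof.
move=> _ maxs subM safeM m mM; split; first exact: subsetP subM _ mM.
move=> J [[_ [_ uniqJ]] [extIJ complJ]] t maxt.
have [subP _] := feasible_sub_maximal extIJ complJ maxt maxs.1.
move: (subsetP subM _ mM); rewrite in_tentS => /andP[_ mP].
rewrite in_tentS (subsetP subP _ mP) andbT.
exact: (safe_unrejected extIJ complJ uniqJ maxs subM safeM maxt.1 mM).
Qed.
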